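(* Let $X$ be a finite set, $t_1<\dots<t_M$ real numbers and $(\mathcal{P}^{t_m})_{m\le M}$ partitions of $X$, with continuous-indexed Multiscale Clustering Filtration $(K^t)_{t\ge t_1}$ and clique complex filtration $(L^t)_{t\ge t_1}$ of the Cluster Assignment Graph, and let $K:=K^{t_M}$. If the sequence is strictly hierarchical, i.e. $\mathcal{P}^{t_1}\le\dots\le\mathcal{P}^{t_M}$, then $H_k^p(L^t)\cong H_k^p(K^t)$ for all integers $0\le k\le\dim(K)-1$, all $t\ge t_1$ and all $p\ge0$.
   Context: A partition of $X$ is a collection of non-empty pairwise disjoint subsets (clusters) whose union is $X$; $\mathcal{P}\le\mathcal{Q}$ means every cluster of $\mathcal{P}$ lies in a cluster of $\mathcal{Q}$. For a finite non-empty set $C$, $\Delta C$ is the set of all non-empty subsets of $C$. The MCF is $K^{t_m}:=\bigcup_{l\le m}\bigcup_{C\in\mathcal{P}^{t_l}}\Delta C$, and for $t\ge t_1$, $K^t:=K^{t_m}$ where $m$ is the largest index with $t_m\le t$. For $t\ge t_1$ let $G_t$ be the graph on $X$ in which distinct $x,y$ are adjacent iff there is $m$ with $t_m\le t$ such that $x,y$ lie in the same cluster of $\mathcal{P}^{t_m}$; $L^t$ is the clique complex of $G_t$. $\dim(K)$ is the maximal dimension of a simplex in $K$. Homology is simplicial homology over $\mathbb{Z}_2$, and for a filtration $(F^t)$, $H_k^p(F^t)$ is the image of $H_k(F^t)\to H_k(F^{t+p})$ induced by inclusion. *)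

From HB Require Import structures.
From mathcomp Require Import all_boot all_order all_algebra.
Set Implicit Arguments. Unset Strict Implicit. Unset Printing Implicit Defensive.
Import Order.TTheory GRing.Theory Num.Theory.

Local Open Scope ring_scope.
Section Defs.
Variable X : finType.

Definition complex := {set {set X}}.

Definition Delta (C : {set X}) : complex := [set s | (s != set0) && (s \subset C)].

Definition refines (P Q : {set {set X}}) : Prop :=
  forall C, C \in P -> exists2 D, D \in Q & C \subset D.

(* dim K = maximal dimension of a simplex = (max cardinality) - 1;
   we expose the maximal cardinality (so dim K = maxcard K - 1). *)
Definition maxcard (K : complex) : nat := \max_(s in K) #|s|.

Definition chains := {ffun {set X} -> ('F_2)^o}.
Definition delta (S : {set X}) : chains := [ffun T => (T == S)%:R].

(* Simplicial boundary: sigma |-> sum of its codimension-1 faces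
   (vertices have boundary 0: non-augmented homology). *)
Definition bdry_fun (c : chains) : chains :=
  \sum_(s : {set X}) (c s : 'F_2) *: \sum_(x in s | s :\ x != set0) delta (s :\ x).

Definition bdry : 'End(chains) := linfun bdry_fun.

Definition Cch (k : nat) (K : complex) : {vspace chains} :=
  <<[seq delta s | s in [set s in K | #|s| == k.+1]]>>%VS.
Definition Zcyc (k : nat) (K : complex) : {vspace chains} :=
  (Cch k K :&: lker bdry)%VS.
Definition Bbd (k : nat) (K : complex) : {vspace chains} :=
  (bdry @: Cch k.+1 K)%VS.

(* For K1 a subcomplex of K2, the image of H_k(K1) -> H_k(K2) induced by
   inclusion is the quotient (Z_k(K1) + B_k(K2)) / B_k(K2).  We record the
   numerator and the denominator. *)
Definition im_num (k : nat) (K1 K2 : complex) : {vspace chains} :=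
  (Zcyc k K1 + Bbd k K2)%VS.
Definition im_den (k : nat) (K2 : complex) : {vspace chains} := Bbd k K2.

(* Linear isomorphism of quotients U1/B1 ~= U2/B2 (B1 <= U1, B2 <= U2):
   a linear map f with f(U1) <= U2, f(B1) <= B2 inducing a bijection.
   (Every linear map between such quotients lifts to the ambient space.) *)
Definition quot_iso (U1 B1 U2 B2 : {vspace chains}) : Prop :=
  exists f : 'End(chains),
    [/\ (f @: U1 <= U2)%VS, (f @: B1 <= B2)%VS,
        (forall u, u \in U1 -> f u \in B2 -> u \in B1)
      & (f @: U1 + B2 = U2)%VS].
End Defs.


Section Filt.
Variables (X : finType) (R : realFieldType) (M : nat)
          (ts : nat -> R) (Ps : nat -> {set {set X}}).

Definition MCF_at (m : nat) : complex X :=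
  \bigcup_(l < M | (l <= m)%N) \bigcup_(C in Ps l) Delta C.

Definition last_idx (t : R) : nat := \max_(m < M | ts m <= t) m.

Definition MCF (t : R) : complex X := MCF_at (last_idx t).

Definition CAG (t : R) (x y : X) : bool :=
  (x != y) && [exists l : 'I_M, (ts l <= t) && [exists C in Ps l, (x \in C) && (y \in C)]].

Definition CCF (t : R) : complex X :=
  [set s | (s != set0) && [forall x in s, forall y in s, (x != y) ==> CAG t x y]].
End Filt.

Definition PH_iso (X : finType) (R : realFieldType) (F G : R -> complex X)
  (k : nat) (t p : R) : Prop :=
  quot_iso (im_num k (F t) (F (t + p))) (im_den k (F (t + p)))
           (im_num k (G t) (G (t + p))) (im_den k (G (t + p))).

(** Under hierarchy every cluster of an earlier partition lies in a cluster of
    the latest partition [P^{t_m}] with [t_m <= t], so two points are adjacent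
    in [G_t] exactly when they share a cluster of [P^{t_m}], and [K^t] is the
    union of the full simplices on those clusters.  The cliques of the
    "same cluster" relation of a partition are precisely the non-empty subsets
    of its clusters, hence [L^t = K^t] and the identity map identifies the
    persistent homology groups. *)
From HB Require Import structures.
From mathcomp Require Import all_boot all_order all_algebra.
Set Implicit Arguments. Unset Strict Implicit. Unset Printing Implicit Defensive.
Import Order.TTheory GRing.Theory Num.Theory.
Local Open Scope ring_scope.

Section Partitions.
Variable X : finType.
Implicit Types (P Q : {set {set X}}) (e : rel X).

Definition same_block P x y := [exists C in P, (x \in C) && (y \in C)].

Definition clique_complex e : complex X :=
  [set s | (s != set0) && [forall x in s, forall y in s, (x != y) ==> e x y]].

Lemma refines_refl P : refines P P.
Proof. by move=> C hC; exists C. Qed.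

Lemma refines_trans P Q (S : {set {set X}}) :
  refines P Q -> refines Q S -> refines P S.
Proof.
move=> hPQ hQS C /hPQ [D /hQS [E hE hDE] hCD].
by exists E => //; apply: subset_trans hDE.
Qed.

Lemma same_block_refines P Q x y :
  refines P Q -> same_block P x y -> same_block Q x y.
Proof.
move=> hPQ /exists_inP [C /hPQ [D hD /subsetP hCD] /andP [hx hy]].
by apply/exists_inP; exists D; rewrite // !hCD.
Qed.

Lemma eq_clique_complex e (e' : rel X) :
  (forall x y, x != y -> e x y = e' x y) -> clique_complex e = clique_complex e'.
Proof.
move=> ee'; apply/setP => s; rewrite !inE; congr (_ && _).
apply: eq_forallb => x; congr (_ ==> _); apply: eq_forallb => y.
by congr (_ ==> _); case: eqVneq => // /ee' ->.
Qed.

Lemma clique_complex_partition P :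
  partition P [set: X] -> clique_complex (same_block P) = \bigcup_(C in P) Delta C.
Proof.
case/and3P => /eqP hcov htriv _; apply/setP => s; rewrite inE.
apply/andP/bigcupP => [[hs0 /forall_inP hclq] | [C hC]].
- have [x hx] := set0Pn _ hs0.
  have hxP : x \in cover P by rewrite hcov inE.
  exists (pblock P x); first exact: pblock_mem.
  rewrite inE hs0; apply/subsetP => y hy.
  have [<- | /(implyP (forall_inP (hclq x hx) y hy))] := eqVneq x y.
    by rewrite mem_pblock.
  case/exists_inP => C hC /andP [hxC hyC].
  by rewrite (def_pblock htriv hC hxC).
- rewrite inE => /andP [hs0 /subsetP hsC]; split=> //.
  apply/forall_inP => x hx; apply/forall_inP => y hy; apply/implyP => _.
  by apply/exists_inP; exists C; rewrite // !hsC.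
Qed.

Lemma quot_iso_refl (U B : {vspace chains X}) : (B <= U)%VS -> quot_iso U B U B.
Proof.
move=> hBU; exists \1%VF; rewrite !lim1g; split=> //.
- by move=> u _; rewrite lfunE.
- exact/addv_idPl.
Qed.

End Partitions.

Section HierarchicalFiltration.
Variables (X : finType) (R : realFieldType) (M : nat)
          (ts : nat -> R) (Ps : nat -> {set {set X}}).
Hypothesis M_gt0 : (0 < M)%N.
Hypothesis ts_lt : forall i j, (i < j < M)%N -> ts i < ts j.
Hypothesis Ps_partition : forall m, (m < M)%N -> partition (Ps m) [set: X].
Hypothesis Ps_refines : forall m, (m.+1 < M)%N -> refines (Ps m) (Ps m.+1).

Lemma refines_le l m : (l <= m < M)%N -> refines (Ps l) (Ps m).
Proof.
elim: m => [|m IHm] /andP [hlm hmM]; first by case: l hlm => // _; exact: refines_refl.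
rewrite leq_eqVlt ltnS in hlm; case/orP: hlm => [/eqP -> | hlm].
  exact: refines_refl.
apply: refines_trans (Ps_refines hmM).
by apply: IHm; rewrite hlm ltnW.
Qed.

Lemma ts_le l m : (l <= m < M)%N -> ts l <= ts m.
Proof.
case/andP; rewrite leq_eqVlt => /orP [/eqP -> // | hlm hmM].
by apply/ltW/ts_lt; rewrite hlm.
Qed.

Section AtTime.
Variable t : R.
Hypothesis t_ge : ts 0%N <= t.

Let last_idx_exists : (0 < #|[pred i : 'I_M | (ts i <= t)%R]|)%N.
Proof. by apply/card_gt0P; exists (Ordinal M_gt0). Qed.

Lemma last_idx_lt : (last_idx M ts t < M)%N.
Proof.
rewrite /last_idx; have [m _ ->] := eq_bigmax_cond (fun i : 'I_M => nat_of_ord i) last_idx_exists.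
exact: ltn_ord.
Qed.

Lemma le_last_idx l : (l < M)%N -> (l <= last_idx M ts t)%N = (ts l <= t).
Proof.
move=> hlM; apply/idP/idP => [hl | hts].
  have [m htm hmax] := eq_bigmax_cond (fun i : 'I_M => nat_of_ord i) last_idx_exists.
  move: hl; rewrite /last_idx hmax => hl.
  by apply: le_trans htm; apply: ts_le; rewrite hl ltn_ord.
exact: (@leq_bigmax_cond _ (fun i : 'I_M => (ts i <= t)%R) _ (Ordinal hlM)).
Qed.

Lemma CAG_same_block x y :
  x != y -> CAG M ts Ps t x y = same_block (Ps (last_idx M ts t)) x y.
Proof.
move=> hxy; rewrite /CAG hxy /=; apply/existsP/idP => [[l /andP [hl hsame]] | hsame].
  apply: same_block_refines hsame; apply: refines_le.
  by rewrite le_last_idx // last_idx_lt andbT.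
exists (Ordinal last_idx_lt); rewrite /= -le_last_idx ?leqnn //.
exact: last_idx_lt.
Qed.

End AtTime.

Lemma MCF_atE m : (m < M)%N -> MCF_at M Ps m = \bigcup_(C in Ps m) Delta C.
Proof.
move=> hmM; apply/setP => s; apply/bigcupP/bigcupP => [[l hl] | [C hC hs]].
  case/bigcupP => C hC; rewrite inE => /andP [hs0 /subsetP hsC].
  have [D hD /subsetP hCD] : exists2 D, D \in Ps m & C \subset D.
    by apply: (refines_le _ hC); rewrite hl hmM.
  by exists D; rewrite // inE hs0; apply/subsetP => x /hsC /hCD.
by exists (Ordinal hmM) => //; apply/bigcupP; exists C.
Qed.

Lemma CCF_MCF t : ts 0%N <= t -> CCF M ts Ps t = MCF M ts Ps t.
Proof.
move=> t_ge; rewrite /MCF MCF_atE ?last_idx_lt //.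
rewrite -clique_complex_partition ?Ps_partition ?last_idx_lt //.
exact: eq_clique_complex (CAG_same_block t_ge).
Qed.

End HierarchicalFiltration.

Theorem corollary2 (X : finType) (R : realFieldType) (M : nat)
    (ts : nat -> R) (Ps : nat -> {set {set X}}) :
  (0 < M)%N ->
  (forall i j, (i < j < M)%N -> ts i < ts j) ->
  (forall m, (m < M)%N -> partition (Ps m) [set: X]) ->
  (* strictly hierarchical: P^{t_1} <= ... <= P^{t_M} *)
  (forall m, (m.+1 < M)%N -> refines (Ps m) (Ps m.+1)) ->
  forall (k : nat) (t p : R),
    (* 0 <= k <= dim(K) - 1, with K = K^{t_M} and dim K = maxcard K - 1 *)
    (k.+2 <= maxcard (MCF M ts Ps (ts M.-1)))%N ->
    ts 0%N <= t -> 0 <= p ->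
    PH_iso (CCF M ts Ps) (MCF M ts Ps) k t p.
Proof.
move=> M_gt0 ts_lt Ps_partition Ps_refines k t p _ t_ge p_ge0.
have tp_ge : ts 0%N <= t + p by apply: le_trans t_ge _; rewrite lerDl.
rewrite /PH_iso !(CCF_MCF M_gt0 ts_lt Ps_partition Ps_refines) //.
exact/quot_iso_refl/addvSr.
Qed.
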